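(* Let $\alpha>1$ and let $u_0:[0,\infty)\to[0,\infty)$ be bounded and integrable with $u_0^{\alpha-1}$ Lipschitz continuous; let $m_0(\rho)=\int_0^\rho u_0$ and $P_t(\rho_0)=\rho_0+\alpha\, m_0(\rho_0)\,u_0(\rho_0)^{\alpha-1}\,t$. Then there exists $T>0$ such that for every $t\in[0,T]$ the map $P_t$ is a bi-Lipschitz bijection of $[0,\infty)$, and the function $$u(t,\rho)=\begin{cases}\big(u_0(P_t^{-1}(\rho))^{-\alpha}+\alpha t\big)^{-1/\alpha}, & u_0(P_t^{-1}(\rho))\neq 0,\\ 0,& u_0(P_t^{-1}(\rho))=0,\end{cases}$$ is continuous, so that $m(t,\rho)=\int_0^\rho u(t,\sigma)\,d\sigma$ is a classical ($C^1$) solution of $m_t+m(m_\rho)^\alpha=0$ on $(0,T]\times(0,\infty)$ with $m(0,\cdot)=m_0$, $m(t,0)=0$. (One may take any $T<1/(\alpha L)$ with $L=\sup_{\rho_0\ge0}\big|u_0^\alpha+m_0\,\frac{d}{d\rho_0}(u_0^{\alpha-1})\big|$.)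
   Context: Radially symmetric densities are written as functions of a volume variable $\rho\ge0$, and the mass function is $m(t,\rho)=\int_0^\rho u(t,\sigma)\,d\sigma$, so $u=m_\rho$. The mass equation is $m_t+m(m_\rho)^\alpha=0$. A classical solution is a $C^1$ function satisfying this equation pointwise; ''given by characteristics'' refers to the explicit formula above. *)

From Stdlib Require Import Reals.
From Coquelicot Require Import Coquelicot.
Open Scope R_scope.

(* Real power for a nonnegative base: x^a for x > 0, and 0 for x <= 0
   (the correct value of 0^a for a > 0; used only at positive bases
   when a <= 0). *)
Definition rpow (x a : R) : R := if Rlt_dec 0 x then Rpower x a else 0.

Definition cont2_on (D : R -> R -> Prop) (f : R -> R -> R) : Prop :=
  forall t x, D t x ->
    filterlim (fun p : R * R => f (fst p) (snd p))
      (within (fun p : R * R => D (fst p) (snd p)) (locally (t, x)))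
      (locally (f t x)).

Definition is_derive_within (I : R -> Prop) (g : R -> R) (t l : R) : Prop :=
  filterlim (fun s => (g s - g t) / (s - t))
    (within (fun s => I s /\ s <> t) (locally t)) (locally l).

(* m is a classical (C^1) solution of m_t + m (m_rho)^alpha = 0 on
   (0,T] x (0,oo): the partial derivatives exist there (the time derivative
   is one-sided at t = T), are jointly continuous on that set together with
   m, and satisfy the equation pointwise. *)
Definition classical_solution (alpha T : R) (m : R -> R -> R) : Prop :=
  let D := fun t rho => 0 < t <= T /\ 0 < rho in
  exists mt mr : R -> R -> R,
    cont2_on D m /\ cont2_on D mt /\ cont2_on D mr /\
    (forall t rho, D t rho ->
       is_derive_within (fun s => 0 < s <= T) (fun s => m s rho) t (mt t rho) /\
       is_derive (fun r => m t r) rho (mr t rho) /\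
       mt t rho + m t rho * rpow (mr t rho) alpha = 0).

From Stdlib Require Import Reals Lra Psatz.
From Coquelicot Require Import Coquelicot.
Open Scope R_scope.

(* Idea of the proof.
   Write G = u0^(alpha-1): by hypothesis G is Lipschitz, and u0 = G^(1/(alpha-1)). *)

(** * 1. Real powers *)

Lemma ballR (x e y : R) : ball x e y <-> Rabs (y - x) < e.
Proof. reflexivity. Qed.

Lemma is_derive_value (f : R -> R) x l l' : is_derive f x l -> l = l' -> is_derive f x l'.
Proof. intros H <-; exact H. Qed.

Lemma rpow_pos x a : 0 < x -> rpow x a = Rpower x a.
Proof. intros H; unfold rpow; destruct (Rlt_dec 0 x); [reflexivity | lra]. Qed.

Lemma rpow_nonpos x a : x <= 0 -> rpow x a = 0.
Proof. intros H; unfold rpow; destruct (Rlt_dec 0 x); [lra | reflexivity]. Qed.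

Lemma Rpower_gt0 x a : 0 < Rpower x a.
Proof. apply exp_pos. Qed.

Lemma rpow_ge0 x a : 0 <= rpow x a.
Proof. unfold rpow; destruct (Rlt_dec 0 x); [left; apply Rpower_gt0 | lra]. Qed.

Lemma rpow_gt0 x a : 0 < x -> 0 < rpow x a.
Proof. intros H; rewrite rpow_pos by exact H; apply Rpower_gt0. Qed.

Lemma rpow_zero a : rpow 0 a = 0.
Proof. apply rpow_nonpos; lra. Qed.

Lemma rpow_mult x b c : rpow (rpow x b) c = rpow x (b * c).
Proof.
  destruct (Rlt_dec 0 x) as [H | H].
  - rewrite (rpow_pos x b), rpow_pos, rpow_pos by (apply Rpower_gt0 || exact H).
    apply Rpower_mult.
  - rewrite !(rpow_nonpos x) by lra; apply rpow_zero.
Qed.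

Lemma rpow_plus x b c : rpow x b * rpow x c = rpow x (b + c).
Proof.
  destruct (Rlt_dec 0 x) as [H | H].
  - rewrite !rpow_pos by exact H; symmetry; apply Rpower_plus.
  - rewrite !rpow_nonpos by lra; ring.
Qed.

Lemma rpow_1 x : 0 <= x -> rpow x 1 = x.
Proof.
  intros H; destruct (Rlt_dec 0 x) as [H' | H'].
  - rewrite rpow_pos by exact H'; apply Rpower_1, H'.
  - rewrite rpow_nonpos; lra.
Qed.

Lemma rpow_le x y c : 0 <= c -> x <= y -> rpow x c <= rpow y c.
Proof.
  intros Hc Hxy; destruct (Rlt_dec 0 x) as [H | H].
  - rewrite !rpow_pos by lra; apply Rle_Rpower_l; lra.
  - rewrite (rpow_nonpos x) by lra; apply rpow_ge0.
Qed.

Lemma rpow_mul_distr x y c : 0 <= x -> 0 < y -> rpow (x * y) c = rpow x c * Rpower y c.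
Proof.
  intros Hx Hy; destruct (Rlt_dec 0 x) as [H | H].
  - rewrite !rpow_pos by (try apply Rmult_lt_0_compat; assumption).
    symmetry; apply Rpower_mult_distr; assumption.
  - replace x with 0 by lra; rewrite Rmult_0_l, !rpow_zero; ring.
Qed.

Lemma rpow_small c : 0 < c -> forall eps, 0 < eps ->
  exists d, 0 < d /\ forall x, Rabs x < d -> rpow x c < eps.
Proof.
  intros Hc eps He; exists (Rpower eps (/ c)); split; [apply Rpower_gt0 |].
  intros x Hx; destruct (Rlt_dec 0 x) as [H | H].
  - rewrite Rabs_right in Hx by lra.
    rewrite rpow_pos by exact H.
    replace eps with (Rpower (Rpower eps (/ c)) c)
      by (rewrite Rpower_mult, Rinv_l, Rpower_1 by lra; reflexivity).
    apply Rlt_Rpower_l; lra.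
  - rewrite rpow_nonpos; lra.
Qed.

Lemma Rpower_derive y c : 0 < y -> is_derive (fun x => Rpower x c) y (c * Rpower y (c - 1)).
Proof. intros; apply is_derive_Reals, derivable_pt_lim_power; assumption. Qed.

Lemma Rpower_cont y c : 0 < y -> continuous (fun x => Rpower x c) y.
Proof. intros Hy; apply (@ex_derive_continuous R_AbsRing R_NormedModule); eexists; apply Rpower_derive, Hy. Qed.

Lemma rpow_locally_zero y c : y < 0 -> locally y (fun x => 0 = rpow x c).
Proof.
  intros Hy; exists (mkposreal (- y) ltac:(lra)); intros z Hz.
  rewrite ballR in Hz; apply Rabs_def2 in Hz; simpl in Hz; rewrite rpow_nonpos; lra.
Qed.

Lemma rpow_locally_Rpower y c : 0 < y -> locally y (fun x => Rpower x c = rpow x c).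
Proof.
  intros Hy; exists (mkposreal y Hy); intros z Hz.
  rewrite ballR in Hz; apply Rabs_def2 in Hz; simpl in Hz; rewrite rpow_pos; lra.
Qed.

Lemma rpow_cont c : 0 < c -> forall y, continuous (fun x => rpow x c) y.
Proof.
  intros Hc y; destruct (Rtotal_order y 0) as [Hy | [-> | Hy]].
  - eapply continuous_ext_loc; [apply rpow_locally_zero, Hy | apply continuous_const].
  - apply filterlim_locally; intros eps.
    destruct (rpow_small c Hc eps (cond_pos eps)) as [d [Hd Hsmall]].
    exists (mkposreal d Hd); intros z Hz; rewrite ballR in Hz |- *.
    rewrite rpow_zero, Rminus_0_r in *; simpl in Hz.
    rewrite Rabs_right by apply Rle_ge, rpow_ge0; apply Hsmall, Hz.
  - eapply continuous_ext_loc; [apply rpow_locally_Rpower, Hy | apply Rpower_cont, Hy].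
Qed.

Lemma rpow_derive c : 1 < c -> forall y, is_derive (fun x => rpow x c) y (c * rpow y (c - 1)).
Proof.
  intros Hc y; destruct (Rtotal_order y 0) as [Hy | [-> | Hy]].
  - rewrite rpow_nonpos, Rmult_0_r by lra.
    eapply is_derive_ext_loc; [apply rpow_locally_zero, Hy | apply (@is_derive_const R_AbsRing R_NormedModule)].
  - rewrite rpow_zero, Rmult_0_r; apply is_derive_Reals; intros eps He.
    destruct (rpow_small (c - 1) ltac:(lra) eps He) as [d [Hd Hsmall]].
    exists (mkposreal d Hd); intros h Hh0 Hh; simpl in Hh.
    rewrite Rplus_0_l, rpow_zero; destruct (Rlt_dec 0 h) as [Hp | Hp].
    + replace ((rpow h c - 0) / h - 0) with (rpow h (c - 1)).
      * rewrite Rabs_right by apply Rle_ge, rpow_ge0; apply Hsmall, Hh.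
      * assert (E : rpow h c = rpow h (c - 1) * rpow h 1)
          by (rewrite rpow_plus; f_equal; ring).
        rewrite E, rpow_1 by lra; field; lra.
    + rewrite rpow_nonpos by lra.
      replace ((0 - 0) / h - 0) with 0 by (field; exact Hh0).
      rewrite Rabs_R0; exact He.
  - rewrite rpow_pos by exact Hy.
    eapply is_derive_ext_loc; [apply rpow_locally_Rpower, Hy | apply Rpower_derive, Hy].
Qed.

(** * 2. Profiles along a characteristic *)

(* In terms of G = u0^(a-1) at the foot of a characteristic:
   [dens0 a G]      = u0 = G^(1/(a-1)),           [dens0_pow a G] = u0^a,
   [stretch a t G]  = 1 + a t u0^a,
   [massW a t G]    = stretch^((a-1)/a)  (the factor m / m0 along the characteristic),
   [densU a t G]    = u0 stretch^(-1/a)  (the density u along the characteristic),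
   [massW_dt a t G] = the time derivative of [massW a t G]. *)
Definition dens0 a G := rpow G (/ (a - 1)).
Definition dens0_pow a G := rpow G (a / (a - 1)).
Definition stretch a t G := 1 + a * t * dens0_pow a G.
Definition massW a t G := Rpower (stretch a t G) ((a - 1) / a).
Definition densU a t G := dens0 a G * Rpower (stretch a t G) (- / a).
Definition massW_dt a t G := (a - 1) * dens0_pow a G * Rpower (stretch a t G) (- / a).

Section Profiles.
Variable a : R.
Hypothesis Ha : 1 < a.

Lemma dens0_ge0 G : 0 <= dens0 a G.
Proof. apply rpow_ge0. Qed.

Lemma densU_ge0 t G : 0 <= densU a t G.
Proof. apply Rmult_le_pos; [apply dens0_ge0 | left; apply Rpower_gt0]. Qed.

Lemma stretch_ge1 t G : 0 <= t -> 1 <= stretch a t G.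
Proof.
  intros Ht; unfold stretch.
  assert (0 <= a * t * dens0_pow a G) by (apply Rmult_le_pos; [nra | apply rpow_ge0]).
  lra.
Qed.

Lemma massW_0 G : massW a 0 G = 1.
Proof.
  unfold massW, stretch, Rpower.
  rewrite Rmult_0_r, Rmult_0_l, Rplus_0_r, ln_1, Rmult_0_r; apply exp_0.
Qed.

Lemma dens0_of u : 0 <= u -> dens0 a (rpow u (a - 1)) = u.
Proof.
  intros Hu; unfold dens0; rewrite rpow_mult.
  replace ((a - 1) * / (a - 1)) with 1 by (field; lra); apply rpow_1, Hu.
Qed.

Lemma dens0_mul G : 0 <= G -> dens0 a G * G = dens0_pow a G.
Proof.
  intros HG; unfold dens0, dens0_pow; rewrite <- (rpow_1 G) at 2 by exact HG.
  rewrite rpow_plus; f_equal; field; lra.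
Qed.

(* W = stretch * stretch^(-1/a), the form in which W meets U. *)
Lemma massW_split t G : 0 <= t -> massW a t G = stretch a t G * Rpower (stretch a t G) (- / a).
Proof.
  intros Ht; pose proof (stretch_ge1 t G Ht).
  unfold massW; rewrite <- (Rpower_1 (stretch a t G)) at 2 by lra.
  rewrite <- Rpower_plus; f_equal; field; lra.
Qed.

(* The rho-equation along a characteristic: u0 (W - a t U G) = U. *)
Lemma profile_identity_rho t G : 0 <= t -> 0 <= G ->
  dens0 a G * (massW a t G - a * t * densU a t G * G) = densU a t G.
Proof.
  intros Ht HG; rewrite massW_split by exact Ht; unfold densU.
  transitivity (dens0 a G * Rpower (stretch a t G) (- / a)
                * (stretch a t G - a * t * (dens0 a G * G))); [ring |].
  rewrite dens0_mul by exact HG; unfold stretch; ring.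
Qed.

(* The t-equation along a characteristic: dW/dt - a U G = - W U^a. *)
Lemma profile_identity_t t G : 0 <= t -> 0 <= G ->
  massW_dt a t G - a * densU a t G * G = - (massW a t G * rpow (densU a t G) a).
Proof.
  intros Ht HG; pose proof (stretch_ge1 t G Ht).
  unfold densU; rewrite rpow_mul_distr by (apply dens0_ge0 || apply Rpower_gt0).
  unfold dens0 at 2; rewrite rpow_mult, Rpower_mult.
  replace (/ (a - 1) * a) with (a / (a - 1)) by (field; lra); fold (dens0_pow a G).
  replace (- / a * a) with (- (1)) by (field; lra).
  rewrite (Rpower_Ropp _ 1), Rpower_1, massW_split by lra; unfold massW_dt.
  transitivity ((a - 1) * dens0_pow a G * Rpower (stretch a t G) (- / a)
                - a * Rpower (stretch a t G) (- / a) * (dens0 a G * G)); [ring |].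
  rewrite dens0_mul by exact HG; field; lra.
Qed.

(* The closed form of the statement is U evaluated at G = u0^(a-1). *)
Lemma densU_formula t u : 0 <= t -> 0 < u ->
  rpow (rpow u (- a) + a * t) (- / a) = densU a t (rpow u (a - 1)).
Proof.
  intros Ht Hu; unfold densU, dens0, stretch, dens0_pow; rewrite !rpow_mult.
  replace ((a - 1) * / (a - 1)) with 1 by (field; lra).
  replace ((a - 1) * (a / (a - 1))) with a by (field; lra).
  rewrite rpow_1 by lra.
  assert (Hinv : rpow u (- a) * rpow u a = 1)
    by (rewrite rpow_plus, rpow_pos, Rplus_opp_l by exact Hu; apply Rpower_O, Hu).
  assert (0 < rpow u (- a)) by (apply rpow_gt0, Hu).
  assert (0 <= a * t * rpow u a) by (apply Rmult_le_pos; [nra | apply rpow_ge0]).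
  replace (rpow u (- a) + a * t) with (rpow u (- a) * (1 + a * t * rpow u a))
    by (transitivity (rpow u (- a) + a * t * (rpow u (- a) * rpow u a)); [ring | rewrite Hinv; ring]).
  rewrite rpow_mul_distr, rpow_mult by lra.
  replace (- a * - / a) with 1 by (field; lra); rewrite rpow_1; lra.
Qed.

Lemma dens0_pow_derive G : is_derive (dens0_pow a) G (a / (a - 1) * dens0 a G).
Proof.
  unfold dens0_pow, dens0; replace (/ (a - 1)) with (a / (a - 1) - 1) by (field; lra).
  apply rpow_derive.
  replace (a / (a - 1)) with (1 + 1 / (a - 1)) by (field; lra).
  assert (0 < 1 / (a - 1)) by (apply Rdiv_lt_0_compat; lra); lra.
Qed.

Lemma massW_derive_G t G : 0 <= t -> is_derive (massW a t) G (a * t * densU a t G).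
Proof.
  intros Ht; pose proof (stretch_ge1 t G Ht).
  eapply is_derive_value.
  - apply (is_derive_comp (fun y => Rpower y ((a - 1) / a)) (stretch a t)).
    + apply Rpower_derive; lra.
    + apply (is_derive_plus (fun _ => 1)).
      * apply (@is_derive_const R_AbsRing R_NormedModule).
      * apply is_derive_scal, dens0_pow_derive.
  - unfold densU; simpl; unfold plus, zero, scal; simpl; unfold mult; simpl.
    replace ((a - 1) / a - 1) with (- / a) by (field; lra); field; lra.
Qed.

Lemma massW_derive_t t G : 0 <= t -> is_derive (fun s => massW a s G) t (massW_dt a t G).
Proof.
  intros Ht; pose proof (stretch_ge1 t G Ht).
  eapply is_derive_value.
  - apply (is_derive_comp (fun y => Rpower y ((a - 1) / a)) (fun s => stretch a s G)).
    + apply Rpower_derive; lra.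
    + unfold stretch; auto_derive; [exact I | reflexivity].
  - unfold massW_dt; simpl; unfold scal; simpl; unfold mult; simpl.
    replace ((a - 1) / a - 1) with (- / a) by (field; lra); field; lra.
Qed.
Lemma massW_mvt t t' G : 0 <= t -> 0 <= t' ->
  exists tau, Rabs (tau - t) <= Rabs (t' - t) /\ 0 <= tau /\
    massW a t' G - massW a t G = massW_dt a tau G * (t' - t).
Proof.
  intros Ht Ht'.
  assert (Hmin : forall s, Rmin t t' <= s -> 0 <= s)
    by (intros s Hs; unfold Rmin in Hs; destruct (Rle_dec t t'); lra).
  destruct (MVT_gen (fun s => massW a s G) t t' (fun s => massW_dt a s G)) as [c [Hc Heq]].
  - intros s Hs; apply massW_derive_t, Hmin; lra.
  - intros s Hs; apply continuity_pt_filterlim.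
    apply (@ex_derive_continuous R_AbsRing R_NormedModule (fun s => massW a s G)).
    eexists; apply massW_derive_t, Hmin, Hs.
  - exists c; split; [| split; [apply Hmin, Hc | exact Heq]].
    unfold Rmin, Rmax in Hc; destruct (Rle_dec t t'); unfold Rabs; repeat destruct Rcase_abs; lra.
Qed.
End Profiles.

Section ProfileContinuity.
Variable a : R.
Hypothesis Ha : 1 < a.

Let Ha_pow : 0 < a / (a - 1).
Proof. apply Rdiv_lt_0_compat; lra. Qed.

Let Ha_inv : 0 < / (a - 1).
Proof. apply Rinv_0_lt_compat; lra. Qed.

Lemma rpow_snd_cont c t G : 0 < c -> continuous (fun p : R * R => rpow (snd p) c) (t, G).
Proof.
  intros Hc; apply (continuous_comp (fun p : R * R => snd p) (fun x => rpow x c)).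
  - apply continuous_snd.
  - apply rpow_cont, Hc.
Qed.

Lemma stretch_pow_cont c t G : 0 <= t ->
  continuous (fun p : R * R => Rpower (stretch a (fst p) (snd p)) c) (t, G).
Proof.
  intros Ht; apply (continuous_comp (fun p : R * R => stretch a (fst p) (snd p))
                                     (fun y => Rpower y c)).
  - apply (continuous_plus (V := R_NormedModule)); [apply continuous_const |].
    apply (continuous_mult (K := R_AbsRing)); [| apply rpow_snd_cont, Ha_pow].
    apply (continuous_mult (K := R_AbsRing)); [apply continuous_const | apply continuous_fst].
  - pose proof (stretch_ge1 a Ha t G Ht); apply Rpower_cont; simpl; lra.
Qed.

Lemma massW_cont t G : 0 <= t -> continuous (fun p : R * R => massW a (fst p) (snd p)) (t, G).
Proof. apply stretch_pow_cont. Qed.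

Lemma densU_cont t G : 0 <= t -> continuous (fun p : R * R => densU a (fst p) (snd p)) (t, G).
Proof.
  intros Ht; apply (continuous_mult (K := R_AbsRing)).
  - apply rpow_snd_cont, Ha_inv.
  - apply stretch_pow_cont, Ht.
Qed.

Lemma massW_dt_cont t G : 0 <= t -> continuous (fun p : R * R => massW_dt a (fst p) (snd p)) (t, G).
Proof.
  intros Ht; apply (continuous_mult (K := R_AbsRing)); [| apply stretch_pow_cont, Ht].
  apply (continuous_mult (K := R_AbsRing)); [apply continuous_const |].
  apply rpow_snd_cont, Ha_pow.
Qed.
End ProfileContinuity.

(** * 3. Elementary estimates and negligible remainders *)

Lemma ballRR (t x e : R) (p : R * R) :
  ball (t, x) e p <-> Rabs (fst p - t) < e /\ Rabs (snd p - x) < e.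
Proof. destruct p; reflexivity. Qed.

Lemma cont2_eps (f : R * R -> R) t x : continuous f (t, x) -> forall eps, 0 < eps ->
  exists d, 0 < d /\ forall s y, Rabs (s - t) < d -> Rabs (y - x) < d ->
    Rabs (f (s, y) - f (t, x)) < eps.
Proof.
  intros Hf eps He; destruct (proj1 (filterlim_locally _ _) Hf (mkposreal eps He)) as [d Hd].
  exists d; split; [apply cond_pos |]; intros s y H1 H2.
  apply (Hd (s, y)), ballRR; split; assumption.
Qed.

Lemma lip_small (I : R -> Prop) (f : R -> R) t L : 0 <= L ->
  (forall s, I s -> Rabs (f s - f t) <= L * Rabs (s - t)) -> forall eps, 0 < eps ->
  exists d, 0 < d /\ forall s, I s -> Rabs (s - t) < d -> Rabs (f s - f t) < eps.
Proof.
  intros HL Hf eps He; exists (eps / (L + 1)); split; [apply Rdiv_lt_0_compat; lra |].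
  intros s Hs Hd; eapply Rle_lt_trans; [apply Hf, Hs |].
  apply Rle_lt_trans with ((L + 1) * Rabs (s - t)); [pose proof (Rabs_pos (s - t)); nra |].
  apply Rmult_lt_reg_l with (/ (L + 1)); [apply Rinv_0_lt_compat; lra |].
  rewrite <- Rmult_assoc, Rinv_l, Rmult_1_l by lra.
  replace (/ (L + 1) * eps) with (eps / (L + 1)) by (field; lra); exact Hd.
Qed.

Lemma lip_cont (f : R -> R) x K : 0 <= K -> (forall y, Rabs (f y - f x) <= K * Rabs (y - x)) ->
  continuous f x.
Proof.
  intros HK Hf; apply filterlim_locally; intros eps.
  destruct (lip_small (fun _ => True) f x K HK (fun y _ => Hf y) eps (cond_pos eps)) as [d [Hd Hb]].
  exists (mkposreal d Hd); intros y Hy; rewrite ballR in Hy |- *; apply Hb; [exact I | exact Hy].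
Qed.

Lemma Rmax_lip x y : Rabs (Rmax 0 y - Rmax 0 x) <= Rabs (y - x).
Proof.
  unfold Rmax; destruct (Rle_dec 0 y), (Rle_dec 0 x); unfold Rabs;
    repeat destruct Rcase_abs; lra.
Qed.

Definition negligible (D : R -> Prop) (x : R) (e : R -> R) : Prop :=
  forall eps, 0 < eps -> exists d, 0 < d /\
    forall y, D y -> Rabs (y - x) < d -> Rabs (e y) <= eps * Rabs (y - x).

Definition locally_bounded (D : R -> Prop) (x : R) (c : R -> R) : Prop :=
  exists C d, 0 < d /\ forall y, D y -> Rabs (y - x) < d -> Rabs (c y) <= C.

Lemma negligible_ext D x e e' : (forall y, D y -> e y = e' y) ->
  negligible D x e -> negligible D x e'.
Proof.
  intros He Hn eps Heps; destruct (Hn eps Heps) as [d [Hd Hb]].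
  exists d; split; [exact Hd |]; intros y Hy Hyx; rewrite <- He by exact Hy; apply Hb; assumption.
Qed.

Lemma negligible_derive D f x l : is_derive f x l ->
  negligible D x (fun y => f y - f x - l * (y - x)).
Proof.
  intros Hf eps He; apply is_derive_Reals in Hf; destruct (Hf eps He) as [d Hd].
  exists d; split; [apply cond_pos |]; intros y _ Hy.
  destruct (Req_dec y x) as [-> | Hyx].
  - unfold Rminus; rewrite !Rplus_opp_r, Rmult_0_r, Rplus_opp_r, Rabs_R0; lra.
  - specialize (Hd (y - x) ltac:(lra) Hy); replace (x + (y - x)) with y in Hd by ring.
    replace (f y - f x - l * (y - x)) with ((y - x) * ((f y - f x) / (y - x) - l))
      by (field; lra).
    rewrite Rabs_mult, Rmult_comm; apply Rmult_le_compat_r; [apply Rabs_pos | lra].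
Qed.

Lemma negligible_plus D x e1 e2 : negligible D x e1 -> negligible D x e2 ->
  negligible D x (fun y => e1 y + e2 y).
Proof.
  intros H1 H2 eps He.
  destruct (H1 (eps / 2) ltac:(lra)) as [d1 [Hd1 B1]].
  destruct (H2 (eps / 2) ltac:(lra)) as [d2 [Hd2 B2]].
  exists (Rmin d1 d2); split; [apply Rmin_pos; assumption |]; intros y Hy Hyx.
  specialize (B1 y Hy (Rlt_le_trans _ _ _ Hyx (Rmin_l _ _))).
  specialize (B2 y Hy (Rlt_le_trans _ _ _ Hyx (Rmin_r _ _))).
  eapply Rle_trans; [apply Rabs_triang | lra].
Qed.

Lemma continuous_locally_bounded D f x : continuous f x -> locally_bounded D x f.
Proof.
  intros Hf; destruct (proj1 (filterlim_locally _ _) Hf (mkposreal 1 Rlt_0_1)) as [d Hd].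
  exists (Rabs (f x) + 1), d; split; [apply cond_pos |]; intros y _ Hy.
  assert (Hb : Rabs (f y - f x) < 1) by exact (Hd y Hy).
  pose proof (Rabs_triang_inv (f y) (f x)); lra.
Qed.

Lemma negligible_bounded_mult D x c e : locally_bounded D x c -> negligible D x e ->
  negligible D x (fun y => c y * e y).
Proof.
  intros [C [d0 [Hd0 Hc]]] He eps Heps.
  assert (HC : 0 <= Rabs C) by apply Rabs_pos.
  destruct (He (eps / (Rabs C + 1)) ltac:(apply Rdiv_lt_0_compat; lra)) as [d [Hd Hb]].
  exists (Rmin d0 d); split; [apply Rmin_pos; assumption |]; intros y Hy Hyx.
  specialize (Hc y Hy (Rlt_le_trans _ _ _ Hyx (Rmin_l _ _))).
  specialize (Hb y Hy (Rlt_le_trans _ _ _ Hyx (Rmin_r _ _))).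
  rewrite Rabs_mult; apply Rle_trans with ((Rabs C + 1) * (eps / (Rabs C + 1) * Rabs (y - x))).
  - apply Rmult_le_compat; try apply Rabs_pos; [pose proof (Rle_abs C); lra | exact Hb].
  - right; field; lra.
Qed.

Lemma negligible_comp D D' x h K e : 0 <= K ->
  (forall y, D y -> D' (h y)) ->
  (forall y, D y -> Rabs (h y - h x) <= K * Rabs (y - x)) ->
  negligible D' (h x) e -> negligible D x (fun y => e (h y)).
Proof.
  intros HK HD Hh He eps Heps.
  destruct (He (eps / (K + 1)) ltac:(apply Rdiv_lt_0_compat; lra)) as [d [Hd Hb]].
  exists (d / (K + 1)); split; [apply Rdiv_lt_0_compat; lra |]; intros y Hy Hyx.
  assert (Hhy : Rabs (h y - h x) <= (K + 1) * Rabs (y - x)).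
  { eapply Rle_trans; [apply Hh, Hy |]; apply Rmult_le_compat_r; [apply Rabs_pos | lra]. }
  assert (Hhd : Rabs (h y - h x) < d).
  { eapply Rle_lt_trans; [exact Hhy |].
    apply Rmult_lt_reg_l with (/ (K + 1)); [apply Rinv_0_lt_compat; lra |].
    rewrite <- Rmult_assoc, Rinv_l, Rmult_1_l by lra; rewrite Rmult_comm; exact Hyx. }
  eapply Rle_trans; [apply Hb; [apply HD, Hy | exact Hhd] |].
  apply Rle_trans with (eps / (K + 1) * ((K + 1) * Rabs (y - x))).
  - apply Rmult_le_compat_l; [left; apply Rdiv_lt_0_compat; lra | exact Hhy].
  - right; field; lra.
Qed.

Lemma negligible_quotient D x e : negligible D x e -> forall eps, 0 < eps ->
  exists d, 0 < d /\ forall y, D y -> y <> x -> Rabs (y - x) < d ->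
    Rabs (e y / (y - x)) < eps.
Proof.
  intros He eps Heps; destruct (He (eps / 2) ltac:(lra)) as [d [Hd Hb]].
  exists d; split; [exact Hd |]; intros y Hy Hyx Hd'.
  assert (Hpos : 0 < Rabs (y - x)) by (apply Rabs_pos_lt; lra).
  unfold Rdiv; rewrite Rabs_mult, Rabs_inv.
  apply Rmult_lt_reg_r with (Rabs (y - x)); [exact Hpos |].
  rewrite Rmult_assoc, Rinv_l, Rmult_1_r by lra.
  specialize (Hb y Hy Hd'); nra.
Qed.

Lemma negligible_is_derive D f x l : (exists r, 0 < r /\ forall y, Rabs (y - x) < r -> D y) ->
  negligible D x (fun y => f y - f x - l * (y - x)) -> is_derive f x l.
Proof.
  intros [r [Hr HD]] Hn; apply is_derive_Reals; intros eps Heps.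
  destruct (negligible_quotient D x _ Hn eps Heps) as [d [Hd Hq]].
  exists (mkposreal (Rmin r d) (Rmin_pos _ _ Hr Hd)); intros h Hh0 Hh; simpl in Hh.
  assert (Hhr : Rabs (x + h - x) < Rmin r d) by (replace (x + h - x) with h by ring; exact Hh).
  specialize (Hq (x + h) (HD _ (Rlt_le_trans _ _ _ Hhr (Rmin_l _ _))) ltac:(lra)
                 (Rlt_le_trans _ _ _ Hhr (Rmin_r _ _))).
  replace ((f (x + h) - f x) / h - l) with ((f (x + h) - f x - l * (x + h - x)) / (x + h - x))
    by (field; exact Hh0).
  exact Hq.
Qed.

Lemma is_derive_within_eps (I : R -> Prop) (g : R -> R) t l :
  (forall eps, 0 < eps -> exists d, 0 < d /\ forall s, I s -> s <> t -> Rabs (s - t) < d ->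
     Rabs ((g s - g t) / (s - t) - l) < eps) ->
  is_derive_within I g t l.
Proof.
  intros Hg; apply filterlim_locally; intros eps.
  destruct (Hg eps (cond_pos eps)) as [d [Hd Hb]].
  exists (mkposreal d Hd); intros s Hs [HIs Hst]; rewrite ballR in Hs |- *.
  apply Hb; assumption.
Qed.

Lemma is_derive_within_ext (I : R -> Prop) (g h : R -> R) t l :
  (forall s, I s -> g s = h s) -> I t -> is_derive_within I h t l -> is_derive_within I g t l.
Proof.
  intros Hgh It Hh; unfold is_derive_within.
  apply filterlim_ext_loc with (fun s => (h s - h t) / (s - t)); [| exact Hh].
  unfold within; apply filter_forall; intros s [Is _]; rewrite !Hgh by assumption; reflexivity.
Qed.

(** * 4. The initial data *)

Section Characteristics.
Variable a : R.
Hypothesis Ha : 1 < a.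
Variable u0 : R -> R.
Hypothesis u0_nonneg : forall x, 0 <= x -> 0 <= u0 x.
Variables B K : R.
Hypothesis u0_bound : forall x, 0 <= x -> u0 x <= B.
Hypothesis K_ge0 : 0 <= K.

Definition G0 x := rpow (u0 x) (a - 1).
Hypothesis G0_lip : forall x y, 0 <= x -> 0 <= y -> Rabs (G0 x - G0 y) <= K * Rabs (x - y).

(* Extensions to the whole line, constant on x <= 0, to work with two-sided limits. *)
Definition G0e x := G0 (Rmax 0 x).
Definition u0e x := u0 (Rmax 0 x).
Definition mass0 x := RInt u0e 0 x.
Definition Gbound := rpow B (a - 1).

Lemma B_ge0 : 0 <= B.
Proof. apply Rle_trans with (u0 0); [apply u0_nonneg | apply u0_bound]; lra. Qed.

Lemma G0_ge0 x : 0 <= G0 x.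
Proof. apply rpow_ge0. Qed.

Lemma G0_le x : 0 <= x -> G0 x <= Gbound.
Proof. intros Hx; apply rpow_le; [lra | apply u0_bound, Hx]. Qed.

Lemma G0e_eq x : 0 <= x -> G0e x = G0 x.
Proof. intros Hx; unfold G0e; rewrite Rmax_right by exact Hx; reflexivity. Qed.

Lemma u0e_eq x : u0e x = dens0 a (G0e x).
Proof. unfold u0e, G0e, G0; rewrite (dens0_of a Ha) by (apply u0_nonneg, Rmax_l); reflexivity. Qed.

Lemma u0e_nonneg x : 0 <= u0e x.
Proof. apply u0_nonneg, Rmax_l. Qed.

Lemma u0e_le x : u0e x <= B.
Proof. apply u0_bound, Rmax_l. Qed.

Lemma G0e_cont x : continuous G0e x.
Proof.
  apply lip_cont with K; [exact K_ge0 |]; intros y; eapply Rle_trans; [apply G0_lip; apply Rmax_l |].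
  apply Rmult_le_compat_l; [exact K_ge0 | apply Rmax_lip].
Qed.

Lemma u0e_cont x : continuous u0e x.
Proof.
  apply continuous_ext with (fun y => dens0 a (G0e y)); [intros; symmetry; apply u0e_eq |].
  apply (continuous_comp G0e (dens0 a)); [apply G0e_cont | apply rpow_cont, Rinv_0_lt_compat; lra].
Qed.

Lemma u0e_ex_RInt x y : ex_RInt u0e x y.
Proof. apply (@ex_RInt_continuous R_CompleteNormedModule); intros; apply u0e_cont. Qed.

Lemma mass0_derive x : is_derive mass0 x (u0e x).
Proof.
  apply is_derive_RInt with 0; [| apply u0e_cont].
  apply filter_forall; intros b; apply (@RInt_correct R_CompleteNormedModule), u0e_ex_RInt.
Qed.

Lemma mass0_cont x : continuous mass0 x.
Proof. apply (@ex_derive_continuous R_AbsRing R_NormedModule); eexists; apply mass0_derive. Qed.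

Lemma mass0_diff x y : mass0 y - mass0 x = RInt u0e x y.
Proof.
  unfold mass0; rewrite <- (RInt_Chasles u0e 0 x y) by apply u0e_ex_RInt.
  change (plus (RInt u0e 0 x) (RInt u0e x y)) with (RInt u0e 0 x + RInt u0e x y); ring.
Qed.

Lemma mass0_lip x y : Rabs (mass0 x - mass0 y) <= B * Rabs (x - y).
Proof.
  rewrite mass0_diff, Rmult_comm; apply (norm_RInt_le_const_abs u0e y x).
  - intros z _; apply Rabs_le; pose proof (u0e_nonneg z); pose proof (u0e_le z); lra.
  - apply (@RInt_correct R_CompleteNormedModule), u0e_ex_RInt.
Qed.

Lemma mass0_mono x y : x <= y -> mass0 x <= mass0 y.
Proof.
  intros Hxy; assert (0 <= RInt u0e x y)
    by (apply RInt_ge_0; [exact Hxy | apply u0e_ex_RInt | intros; apply u0e_nonneg]).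
  rewrite <- mass0_diff in *; lra.
Qed.

Lemma mass0_0 : mass0 0 = 0.
Proof. unfold mass0; rewrite RInt_point; reflexivity. Qed.

Lemma mass0_nonneg x : 0 <= x -> 0 <= mass0 x.
Proof. intros Hx; rewrite <- mass0_0; apply mass0_mono, Hx. Qed.

Lemma mass0_eq x : 0 <= x -> RInt u0 0 x = mass0 x.
Proof.
  intros Hx; apply RInt_ext; intros z Hz; rewrite Rmin_left, Rmax_right in Hz by exact Hx.
  unfold u0e; rewrite Rmax_right; lra.
Qed.

Lemma mass0_bounded : ex_RInt_gen u0 (at_point 0) (Rbar_locally p_infty) ->
  exists Mb, 0 <= Mb /\ forall x, 0 <= x -> mass0 x <= Mb.
Proof.
  intros [l Hl]; exists (Rmax l 0); split; [apply Rmax_r |]; intros x Hx.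
  apply Rle_trans with l; [| apply Rmax_l].
  destruct (Rle_dec (mass0 x) l) as [Hle | Hgt]; [exact Hle | exfalso].
  assert (Heps : 0 < mass0 x - l) by lra.
  destruct (Hl _ (locally_ball l (mkposreal _ Heps))) as [Q R HQ [M HM] Hp].
  set (b := Rmax x M + 1).
  assert (Hxb : x <= b) by (unfold b; pose proof (Rmax_l x M); lra).
  assert (HMb : M < b) by (unfold b; pose proof (Rmax_r x M); lra).
  destruct (Hp 0 b HQ (HM b HMb)) as [y [Hy Hyl]]; simpl in Hy, Hyl.
  rewrite ballR in Hyl; apply Rabs_def2 in Hyl; simpl in Hyl.
  apply (@is_RInt_unique R_CompleteNormedModule) in Hy; rewrite mass0_eq in Hy by lra.
  pose proof (mass0_mono x b Hxb); lra.
Qed.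

(** * 5. The characteristics are bi-Lipschitz for short times *)

Variable Mb : R.
Hypothesis Mb_ge0 : 0 <= Mb.
Hypothesis mass0_le : forall x, 0 <= x -> mass0 x <= Mb.

Definition speed x := mass0 x * G0 x.
Definition charP t x := x + a * t * speed x.
Definition Lspeed := Mb * K + Gbound * B.
Definition Bspeed := Mb * Gbound.
Definition Tmax := / (2 * (a * Lspeed + 1)).

Lemma Lspeed_ge0 : 0 <= Lspeed.
Proof.
  pose proof B_ge0; assert (0 <= Gbound) by apply rpow_ge0.
  unfold Lspeed; apply Rplus_le_le_0_compat; apply Rmult_le_pos; assumption.
Qed.

Lemma Bspeed_ge0 : 0 <= Bspeed.
Proof. apply Rmult_le_pos; [exact Mb_ge0 | apply rpow_ge0]. Qed.

Lemma speed_ge0 x : 0 <= x -> 0 <= speed x.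
Proof. intros Hx; apply Rmult_le_pos; [apply mass0_nonneg, Hx | apply G0_ge0]. Qed.

Lemma speed_le x : 0 <= x -> speed x <= Bspeed.
Proof.
  intros Hx; apply Rmult_le_compat;
    [apply mass0_nonneg, Hx | apply G0_ge0 | apply mass0_le, Hx | apply G0_le, Hx].
Qed.

Lemma speed_lip x y : 0 <= x -> 0 <= y -> Rabs (speed x - speed y) <= Lspeed * Rabs (x - y).
Proof.
  intros Hx Hy; unfold speed, Lspeed.
  replace (mass0 x * G0 x - mass0 y * G0 y)
    with (mass0 x * (G0 x - G0 y) + G0 y * (mass0 x - mass0 y)) by ring.
  eapply Rle_trans; [apply Rabs_triang |]; rewrite !Rabs_mult, Rmult_plus_distr_r, !Rmult_assoc.
  apply Rplus_le_compat; apply Rmult_le_compat; try apply Rabs_pos.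
  - rewrite Rabs_right by (apply Rle_ge, mass0_nonneg, Hx); apply mass0_le, Hx.
  - apply G0_lip; assumption.
  - rewrite Rabs_right by apply Rle_ge, G0_ge0; apply G0_le, Hy.
  - apply mass0_lip.
Qed.

Lemma Tmax_pos : 0 < Tmax.
Proof.
  pose proof Lspeed_ge0; assert (0 <= a * Lspeed) by (apply Rmult_le_pos; lra).
  apply Rinv_0_lt_compat; lra.
Qed.

(* The choice of Tmax: the perturbation a t speed is 1/2-Lipschitz. *)
Lemma Tmax_small t : 0 <= t <= Tmax -> a * t * Lspeed <= / 2.
Proof.
  intros [H0 H1]; pose proof Lspeed_ge0; assert (0 <= a * Lspeed) by (apply Rmult_le_pos; lra).
  apply Rle_trans with (a * Lspeed * Tmax).
  - replace (a * t * Lspeed) with (a * Lspeed * t) by ring; apply Rmult_le_compat_l; lra.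
  - unfold Tmax; apply Rmult_le_reg_l with (2 * (a * Lspeed + 1)); [lra |].
    field_simplify; lra.
Qed.

Lemma charP_ge t x : 0 <= t -> 0 <= x -> x <= charP t x.
Proof.
  intros Ht Hx; pose proof (speed_ge0 x Hx).
  assert (0 <= a * t * speed x) by (apply Rmult_le_pos; [apply Rmult_le_pos |]; lra).
  unfold charP; lra.
Qed.

Lemma charP_0 t : charP t 0 = 0.
Proof. unfold charP, speed; rewrite mass0_0; ring. Qed.

Lemma charP_bilip t x y : 0 <= t <= Tmax -> 0 <= x -> 0 <= y ->
  / 2 * Rabs (x - y) <= Rabs (charP t x - charP t y) <= 3 / 2 * Rabs (x - y).
Proof.
  intros Ht Hx Hy; pose proof (Tmax_small t Ht).
  assert (Hat : 0 <= a * t) by (apply Rmult_le_pos; lra).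
  assert (Hpert : Rabs (a * t * (speed x - speed y)) <= / 2 * Rabs (x - y)).
  { rewrite Rabs_mult, (Rabs_right (a * t)) by lra.
    apply Rle_trans with (a * t * (Lspeed * Rabs (x - y))).
    - apply Rmult_le_compat_l; [exact Hat | apply speed_lip; assumption].
    - rewrite <- Rmult_assoc; apply Rmult_le_compat_r; [apply Rabs_pos | assumption]. }
  unfold charP; replace (x + a * t * speed x - (y + a * t * speed y))
    with ((x - y) + a * t * (speed x - speed y)) by ring.
  pose proof (Rabs_triang (x - y) (a * t * (speed x - speed y))).
  pose proof (Rabs_triang_inv (x - y) (- (a * t * (speed x - speed y)))) as Hinv.
  rewrite Rabs_Ropp in Hinv.
  replace (x - y - - (a * t * (speed x - speed y)))
    with (x - y + a * t * (speed x - speed y)) in Hinv by ring; lra.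
Qed.

(* Onto: by the intermediate value theorem between 0 = charP t 0 and charP t y >= y. *)
Lemma charP_surj t y : 0 <= t <= Tmax -> 0 <= y -> exists x, 0 <= x /\ charP t x = y.
Proof.
  intros Ht Hy; set (f := fun z => charP t (Rmax 0 z)).
  assert (Hc : continuity f).
  { intros z; apply continuity_pt_filterlim, lip_cont with (3 / 2); [lra |]; intros w; unfold f.
    eapply Rle_trans; [apply charP_bilip; [exact Ht | apply Rmax_l | apply Rmax_l] |].
    apply Rmult_le_compat_l; [lra | apply Rmax_lip]. }
  destruct (IVT_gen f 0 y y Hc) as [x [Hx1 Hx2]].
  - unfold f; rewrite Rmax_left, charP_0, (Rmax_right 0 y) by lra.
    pose proof (charP_ge t y ltac:(lra) Hy); rewrite Rmin_left, Rmax_right; lra.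
  - rewrite Rmin_left, Rmax_right in Hx1 by lra.
    exists x; split; [lra |]; unfold f in Hx2; rewrite Rmax_right in Hx2; lra.
Qed.

(** * 6. Inverse characteristics and continuity *)

Variable X : R -> R -> R.
Hypothesis X_spec : forall t rho, 0 <= t <= Tmax -> 0 <= rho ->
  0 <= X t rho /\ charP t (X t rho) = rho.

Lemma X_ge0 t rho : 0 <= t <= Tmax -> 0 <= rho -> 0 <= X t rho.
Proof. intros; apply X_spec; assumption. Qed.

Lemma X_eq t rho : 0 <= t <= Tmax -> 0 <= rho -> charP t (X t rho) = rho.
Proof. intros; apply X_spec; assumption. Qed.

(* X fixes 0 (characteristics move to the right) and X 0 is the identity. *)
Lemma X_zero t : 0 <= t <= Tmax -> X t 0 = 0.
Proof.
  intros Ht; pose proof (X_ge0 t 0 Ht (Rle_refl 0)) as Hge.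
  pose proof (charP_ge t (X t 0) (proj1 Ht) Hge) as Hle; rewrite X_eq in Hle by lra; lra.
Qed.

Lemma X_initial rho : 0 <= rho -> X 0 rho = rho.
Proof.
  intros Hr; pose proof Tmax_pos; pose proof (X_eq 0 rho ltac:(lra) Hr) as Heq.
  unfold charP in Heq; lra.
Qed.

Lemma X_lip t t' rho rho' : 0 <= t <= Tmax -> 0 <= t' <= Tmax -> 0 <= rho -> 0 <= rho' ->
  Rabs (X t rho - X t' rho') <= 2 * Rabs (rho - rho') + 2 * a * Bspeed * Rabs (t - t').
Proof.
  intros Ht Ht' Hr Hr'; set (x := X t rho); set (x' := X t' rho').
  assert (Hx : 0 <= x) by (apply X_ge0; assumption).
  assert (Hx' : 0 <= x') by (apply X_ge0; assumption).
  destruct (charP_bilip t x x' Ht Hx Hx') as [Hlow _].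
  replace (charP t x - charP t x') with ((rho - rho') - a * (t - t') * speed x') in Hlow
    by (rewrite <- (X_eq t rho), <- (X_eq t' rho') by assumption; unfold charP; fold x x'; ring).
  assert (Hsp : Rabs (a * (t - t') * speed x') <= a * Bspeed * Rabs (t - t')).
  { rewrite !Rabs_mult, (Rabs_right a), (Rabs_right (speed x'))
      by (apply Rle_ge; lra || apply speed_ge0, Hx').
    pose proof (speed_le x' Hx'); pose proof (Rabs_pos (t - t')).
    replace (a * Bspeed * Rabs (t - t')) with (a * Rabs (t - t') * Bspeed) by ring.
    apply Rmult_le_compat_l; [apply Rmult_le_pos |]; lra. }
  pose proof (Rabs_triang (rho - rho') (- (a * (t - t') * speed x'))) as Htri.
  replace (rho - rho' + - (a * (t - t') * speed x'))
    with (rho - rho' - a * (t - t') * speed x') in Htri by ring.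
  rewrite Rabs_Ropp in Htri; lra.
Qed.

Lemma cont_along_X (Psi : R -> R -> R) t x : 0 <= t <= Tmax -> 0 <= x ->
  continuous (fun p : R * R => Psi (fst p) (snd p)) (t, X t x) -> forall eps, 0 < eps ->
  exists d, 0 < d /\ forall s y, 0 <= s <= Tmax -> 0 <= y ->
    Rabs (s - t) < d -> Rabs (y - x) < d -> Rabs (Psi s (X s y) - Psi t (X t x)) < eps.
Proof.
  intros Ht Hx Hc eps He; destruct (cont2_eps _ _ _ Hc eps He) as [d [Hd Hpsi]].
  pose proof Bspeed_ge0; set (C := 2 + 2 * a * Bspeed).
  assert (HC : 0 <= C) by (unfold C; assert (0 <= a * Bspeed) by (apply Rmult_le_pos; lra); lra).
  assert (HCd : C * (d / (C + 1)) < d).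
  { apply Rmult_lt_reg_r with (C + 1); [lra |]; field_simplify; lra. }
  assert (Hd1 : d / (C + 1) <= d) by (apply Rmult_le_reg_r with (C + 1); [lra |]; field_simplify; nra).
  exists (d / (C + 1)); split; [apply Rdiv_lt_0_compat; lra |]; intros s y Hs Hy H1 H2.
  apply (Hpsi s (X s y)); [lra |].
  eapply Rle_lt_trans; [apply X_lip; assumption |].
  assert (0 <= 2 * a * Bspeed) by (apply Rmult_le_pos; lra).
  apply Rle_lt_trans with (C * (d / (C + 1))); [| exact HCd].
  assert (HC2 : C = 2 + 2 * a * Bspeed) by reflexivity.
  set (e := d / (C + 1)) in *; rewrite HC2; nra.
Qed.

Lemma cont2_along_X (F Psi : R -> R -> R) (Dm : R -> R -> Prop) :
  (forall t x, Dm t x -> 0 <= t <= Tmax /\ 0 <= x) ->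
  (forall t x, Dm t x -> F t x = Psi t (X t x)) ->
  (forall t x, Dm t x -> continuous (fun p : R * R => Psi (fst p) (snd p)) (t, X t x)) ->
  cont2_on Dm F.
Proof.
  intros HD HF HC t x Htx; apply filterlim_locally; intros eps.
  destruct (HD t x Htx) as [Ht Hx].
  destruct (cont_along_X Psi t x Ht Hx (HC t x Htx) eps (cond_pos eps)) as [d [Hd Hb]].
  exists (mkposreal d Hd); intros [s y] Hsy Hdom; simpl in Hdom; rewrite ballRR in Hsy.
  simpl in Hsy |- *; rewrite ballR, (HF s y Hdom), (HF t x Htx).
  destruct (HD s y Hdom); apply Hb; tauto.
Qed.

Lemma cont_along_X_rho (Psi : R -> R -> R) t r : 0 <= t <= Tmax ->
  continuous (fun p : R * R => Psi (fst p) (snd p)) (t, X t (Rmax 0 r)) ->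
  continuous (fun r => Psi t (X t (Rmax 0 r))) r.
Proof.
  intros Ht Hc; apply filterlim_locally; intros eps.
  destruct (cont_along_X Psi t (Rmax 0 r) Ht (Rmax_l 0 r) Hc eps (cond_pos eps)) as [d [Hd Hb]].
  exists (mkposreal d Hd); intros r' Hr'; rewrite ballR in Hr' |- *.
  apply Hb; [exact Ht | apply Rmax_l | rewrite Rminus_diag, Rabs_R0; exact Hd |].
  eapply Rle_lt_trans; [apply Rmax_lip | exact Hr'].
Qed.

(** * 7. The solution along the characteristics *)

(* u and m written along the characteristics. *)
Definition densu t rho := densU a t (G0 (X t rho)).
Definition massH t rho := mass0 (X t rho) * massW a t (G0 (X t rho)).

Lemma profile_G0e_cont (Phi : R -> R -> R) t z :
  continuous (fun p : R * R => Phi (fst p) (snd p)) (t, G0e z) ->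
  continuous (fun p : R * R => Phi (fst p) (G0e (snd p))) (t, z).
Proof.
  intros HPhi; apply (continuous_comp_2 (fun p : R * R => fst p) (fun p : R * R => G0e (snd p)) Phi).
  - apply continuous_fst.
  - apply (continuous_comp (fun p : R * R => snd p) G0e); [apply continuous_snd | apply G0e_cont].
  - exact HPhi.
Qed.

Lemma densu_profile_cont t z : 0 <= t ->
  continuous (fun p : R * R => densU a (fst p) (G0e (snd p))) (t, z).
Proof. intros Ht; apply profile_G0e_cont, densU_cont; assumption. Qed.

Lemma mass0_snd_cont t z : continuous (fun p : R * R => mass0 (snd p)) (t, z).
Proof.
  apply (continuous_comp (fun p : R * R => snd p) mass0); [apply continuous_snd | apply mass0_cont].
Qed.

Lemma massH_profile_cont t z : 0 <= t ->
  continuous (fun p : R * R => mass0 (snd p) * massW a (fst p) (G0e (snd p))) (t, z).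
Proof.
  intros Ht; apply (continuous_mult (K := R_AbsRing)); [apply mass0_snd_cont |].
  apply profile_G0e_cont, massW_cont; assumption.
Qed.

Lemma massH_dt_profile_cont t z : 0 <= t ->
  continuous (fun p : R * R => mass0 (snd p) * massW_dt a (fst p) (G0e (snd p))) (t, z).
Proof.
  intros Ht; apply (continuous_mult (K := R_AbsRing)); [apply mass0_snd_cont |].
  apply profile_G0e_cont, massW_dt_cont; assumption.
Qed.

(* The key estimate: although G0 is only Lipschitz, m0(y) W(t, G0 y) is differentiable
   with respect to the characteristic variable y + a t speed(y), with derivative U.
   The remainder splits as (o(y - x)) * (bounded) + (bounded) * (o(y - x)), the first
   o-term from the derivative of m0 and the second from the derivative of W in G. *)
Lemma mass_increment t x : 0 <= t -> 0 <= x ->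
  negligible (fun y => 0 <= y) x (fun y =>
    mass0 y * massW a t (G0 y) - mass0 x * massW a t (G0 x)
    - densU a t (G0 x) * ((y - x) + a * t * (speed y - speed x))).
Proof.
  intros Ht Hx.
  set (G := G0 x); set (U := densU a t G); set (A := dens0 a G).
  assert (HAZ : A * (massW a t G - a * t * U * G) = U)
    by (apply profile_identity_rho; [exact Ha | exact Ht | apply G0_ge0]).
  assert (Hmass : negligible (fun y => 0 <= y) x (fun y => mass0 y - mass0 x - A * (y - x))).
  { unfold A, G; rewrite <- G0e_eq, <- u0e_eq by exact Hx.
    apply negligible_derive, mass0_derive. }
  assert (HW : negligible (fun y => 0 <= y) x
                 (fun y => massW a t (G0 y) - massW a t G - a * t * U * (G0 y - G))).
  { apply (negligible_comp _ (fun _ => True) x G0 K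
             (fun G' => massW a t G' - massW a t G - a * t * U * (G' - G))); [exact K_ge0 | tauto | |].
    - intros y Hy; apply G0_lip; assumption.
    - apply negligible_derive, massW_derive_G; assumption. }
  assert (HZ : locally_bounded (fun y => 0 <= y) x (fun y => massW a t (G0e y) - a * t * U * G0e y)).
  { apply continuous_locally_bounded.
    apply (continuous_minus (V := R_NormedModule)).
    - apply (continuous_comp G0e (massW a t)); [apply G0e_cont |].
      apply (@ex_derive_continuous R_AbsRing R_NormedModule); eexists; apply massW_derive_G; assumption.
    - apply (continuous_mult (K := R_AbsRing)); [apply continuous_const | apply G0e_cont]. }
  assert (Hc : locally_bounded (fun y => 0 <= y) x (fun y => A * (y - x) + mass0 x)).
  { apply continuous_locally_bounded.
    apply (continuous_plus (V := R_NormedModule)); [| apply continuous_const].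
    apply (continuous_mult (K := R_AbsRing)); [apply continuous_const |].
    apply (continuous_minus (V := R_NormedModule)); [apply continuous_id | apply continuous_const]. }
  eapply negligible_ext;
    [| exact (negligible_plus _ _ _ _ (negligible_bounded_mult _ _ _ _ HZ Hmass)
                                      (negligible_bounded_mult _ _ _ _ Hc HW))].
  intros y Hy; simpl; rewrite G0e_eq by exact Hy; unfold speed; fold G U.
  transitivity (mass0 y * massW a t (G0 y) - mass0 x * massW a t G
                - U * (y - x + a * t * (mass0 y * G0 y - mass0 x * G))
                + (y - x) * (U - A * (massW a t G - a * t * U * G))); [ring |].
  rewrite HAZ; ring.
Qed.

Lemma massH_derive_rho t rho : 0 <= t <= Tmax -> 0 < rho ->
  is_derive (massH t) rho (densu t rho).
Proof.
  intros Ht Hr.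
  apply (negligible_is_derive (fun r => 0 <= r));
    [exists rho; split; [exact Hr | intros y Hy; apply Rabs_def2 in Hy; lra] |].
  assert (Hx : 0 <= X t rho) by (apply X_ge0; lra).
  assert (HXD : forall r, 0 <= r -> 0 <= X t r) by (intros; apply X_ge0; assumption).
  assert (HXlip : forall r, 0 <= r -> Rabs (X t r - X t rho) <= 2 * Rabs (r - rho)).
  { intros r Hr'; eapply Rle_trans; [apply X_lip; lra |].
    rewrite Rminus_diag, Rabs_R0; lra. }
  pose proof (negligible_comp _ _ rho (X t) 2 _ ltac:(lra) HXD HXlip
                (mass_increment t (X t rho) (proj1 Ht) Hx)) as Hinc.
  eapply negligible_ext; [| exact Hinc]; intros r Hr'; simpl; unfold massH, densu.
  replace (X t r - X t rho + a * t * (speed (X t r) - speed (X t rho))) with (r - rho)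
    by (rewrite <- (X_eq t r) at 1 by assumption; rewrite <- (X_eq t rho) at 1 by lra;
        unfold charP; ring).
  reflexivity.
Qed.

Lemma densu_cont_rho t r : 0 <= t <= Tmax -> continuous (fun r => densu t (Rmax 0 r)) r.
Proof.
  intros Ht.
  apply continuous_ext with (fun r => densU a t (G0e (X t (Rmax 0 r)))).
  - intros r'; unfold densu; rewrite G0e_eq by (apply X_ge0; [exact Ht | apply Rmax_l]); reflexivity.
  - apply (cont_along_X_rho (fun s z => densU a s (G0e z))); [exact Ht |].
    apply densu_profile_cont; lra.
Qed.

Lemma massH_cont_rho t r : 0 <= t <= Tmax -> continuous (fun r => massH t (Rmax 0 r)) r.
Proof.
  intros Ht.
  apply continuous_ext with (fun r => mass0 (X t (Rmax 0 r)) * massW a t (G0e (X t (Rmax 0 r)))).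
  - intros r'; unfold massH; rewrite G0e_eq by (apply X_ge0; [exact Ht | apply Rmax_l]); reflexivity.
  - apply (cont_along_X_rho (fun s z => mass0 z * massW a s (G0e z))); [exact Ht |].
    apply massH_profile_cont; lra.
Qed.

Lemma massH_zero t : 0 <= t <= Tmax -> massH t 0 = 0.
Proof. intros Ht; unfold massH; rewrite X_zero, mass0_0 by exact Ht; ring. Qed.

(* Since massH t vanishes at 0 and has derivative densu t, it is the integral of densu t:
   the difference has zero derivative on (0, rho) and is continuous on [0, rho]. *)
Lemma massH_eq_RInt t rho : 0 <= t <= Tmax -> 0 <= rho ->
  RInt (fun r => densu t (Rmax 0 r)) 0 rho = massH t rho.
Proof.
  intros Ht Hr; set (v := fun r => densu t (Rmax 0 r)).
  assert (Hv : forall r, continuous v r) by (intros; apply densu_cont_rho, Ht).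
  assert (HI : forall r, is_derive (RInt v 0) r (v r)).
  { intros r; apply is_derive_RInt with 0; [| apply Hv].
    apply filter_forall; intros b; apply (@RInt_correct R_CompleteNormedModule).
    apply (@ex_RInt_continuous R_CompleteNormedModule); intros; apply Hv. }
  set (f := fun r => RInt v 0 r - massH t (Rmax 0 r)).
  destruct (MVT_gen f 0 rho (fun _ => 0)) as [c [_ Hc]].
  - intros r Hr'; rewrite Rmin_left, Rmax_right in Hr' by lra.
    eapply is_derive_value; [apply (is_derive_minus (V := R_NormedModule)); [apply HI |] |].
    + apply is_derive_ext_loc with (massH t); [| apply massH_derive_rho; lra].
      exists (mkposreal r ltac:(lra)); intros z Hz; rewrite ballR in Hz; simpl in Hz.
      apply Rabs_def2 in Hz; rewrite Rmax_right; lra.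
    + unfold v; rewrite Rmax_right by lra; apply Rminus_diag.
  - intros r _; apply continuity_pt_filterlim, (continuous_minus (V := R_NormedModule)).
    + apply (@ex_derive_continuous R_AbsRing R_NormedModule); eexists; apply HI.
    + apply massH_cont_rho, Ht.
  - unfold f in Hc; rewrite RInt_point, Rmult_0_l, (Rmax_left 0 0), massH_zero,
      (Rmax_right 0 rho) in Hc by lra.
    change (RInt v 0 rho - massH t rho - (0 - 0) = 0) in Hc; lra.
Qed.

(* Moving
   from t to s moves the foot of the characteristic from x to x' = X s rho; the mean value
   theorem in t and the characteristic relation x' - x + a t (q x' - q x) = -a (s - t) q x'
   split the quotient minus its expected limit into a continuity term, the remainder R(x')
   of [mass_increment] divided by s - t, and a Lipschitz term. *)
Lemma massH_quotient_split t s rho : 0 <= t <= Tmax -> 0 <= s <= Tmax -> s <> t -> 0 <= rho ->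
  let x := X t rho in let x' := X s rho in let U := densU a t (G0 x) in
  exists tau, Rabs (tau - t) <= Rabs (s - t) /\ 0 <= tau /\
    (massH s rho - massH t rho) / (s - t) - (mass0 x * massW_dt a t (G0 x) - a * U * speed x)
    = (mass0 x' * massW_dt a tau (G0 x') - mass0 x * massW_dt a t (G0 x))
      + (mass0 x' * massW a t (G0 x') - mass0 x * massW a t (G0 x)
         - U * ((x' - x) + a * t * (speed x' - speed x))) / (s - t)
      - a * U * (speed x' - speed x).
Proof.
  intros Ht Hs Hst Hr x x' U.
  destruct (massW_mvt a Ha t s (G0 x') ltac:(lra) ltac:(lra)) as [tau [Htau [Htau0 Hmvt]]].
  exists tau; split; [exact Htau | split; [exact Htau0 |]].
  assert (Hchar : (x' - x) + a * t * (speed x' - speed x) = - (a * (s - t) * speed x')).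
  { assert (E1 : charP s x' = rho) by (apply X_eq; assumption).
    assert (E2 : charP t x = rho) by (apply X_eq; assumption).
    unfold charP in E1, E2; lra. }
  rewrite Hchar; unfold massH; fold x x'.
  replace (massW a s (G0 x')) with (massW a t (G0 x') + massW_dt a tau (G0 x') * (s - t)) by lra.
  field; lra.
Qed.

(* The time derivative of m along the characteristics, for t > 0: each of the three terms
   of [massH_quotient_split] is small, by joint continuity, negligibility of the remainder
   along the Lipschitz path s |-> X s rho, and the Lipschitz bound on [speed]. *)
Lemma massH_derive_t t rho : 0 < t <= Tmax -> 0 < rho ->
  is_derive_within (fun s => 0 < s <= Tmax) (fun s => massH s rho) t
    (mass0 (X t rho) * massW_dt a t (G0 (X t rho)) - a * densu t rho * speed (X t rho)).
Proof.
  intros Ht Hr; apply is_derive_within_eps; intros eps He.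
  set (I := fun s => 0 < s <= Tmax).
  set (x := X t rho); assert (Hx : 0 <= x) by (apply X_ge0; lra).
  set (U := densU a t (G0 x)); assert (HU : 0 <= U) by apply densU_ge0.
  pose proof Bspeed_ge0; pose proof Lspeed_ge0.
  set (C := 2 * a * Bspeed); assert (HC : 0 <= C) by (apply Rmult_le_pos; lra).
  assert (HXlip : forall s, I s -> Rabs (X s rho - X t rho) <= C * Rabs (s - t)).
  { intros s Hs; eapply Rle_trans; [apply X_lip; unfold I in Hs; lra |].
    rewrite Rminus_diag, Rabs_R0; unfold C; lra. }
  assert (HqLip : forall s, I s -> Rabs (a * U * speed (X s rho) - a * U * speed (X t rho))
                                   <= a * U * Lspeed * C * Rabs (s - t)).
  { intros s Hs; rewrite <- Rmult_minus_distr_l, Rabs_mult, (Rabs_right (a * U))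
      by (apply Rle_ge, Rmult_le_pos; lra).
    rewrite !Rmult_assoc; apply Rmult_le_compat_l; [lra |]; apply Rmult_le_compat_l; [exact HU |].
    eapply Rle_trans; [apply speed_lip; apply X_ge0; unfold I in Hs; lra |].
    apply Rmult_le_compat_l; [exact H0 | apply HXlip, Hs]. }
  (* first term: joint continuity at (t, x), reached since tau and X s rho are close *)
  destruct (cont2_eps _ t x (massH_dt_profile_cont t x ltac:(lra)) (eps / 3) ltac:(lra))
    as [d1 [Hd1 Hterm1]].
  destruct (lip_small I (fun s => X s rho) t C HC HXlip d1 Hd1) as [dX [HdX HtermX]].
  (* second term: the remainder of [mass_increment] along s |-> X s rho *)
  pose proof (negligible_comp I (fun y => 0 <= y) t (fun s => X s rho) C _ HC
                (fun s Hs => X_ge0 s rho ltac:(unfold I in Hs; lra) ltac:(lra)) HXlip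
                (mass_increment t x ltac:(lra) Hx)) as Hinc.
  destruct (negligible_quotient _ _ _ Hinc (eps / 3) ltac:(lra)) as [d2 [Hd2 Hterm2]].
  (* third term: [speed] is Lipschitz *)
  assert (HL3 : 0 <= a * U * Lspeed * C)
    by (apply Rmult_le_pos; [apply Rmult_le_pos; [apply Rmult_le_pos |] |]; lra).
  destruct (lip_small I (fun s => a * U * speed (X s rho)) t _ HL3 HqLip (eps / 3) ltac:(lra))
    as [d3 [Hd3 Hterm3]].
  exists (Rmin (Rmin d1 dX) (Rmin d2 d3)); split; [repeat apply Rmin_pos; assumption |].
  intros s Hs Hst Hsd; apply Rmin_Rgt in Hsd as [Hsd Hsd'].
  apply Rmin_Rgt in Hsd as [Hsd1 HsdX]; apply Rmin_Rgt in Hsd' as [Hsd2 Hsd3].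
  destruct (massH_quotient_split t s rho ltac:(lra) ltac:(unfold I in Hs; lra) Hst ltac:(lra))
    as [tau [Htau [Htau0 Hsplit]]]; fold x U in Hsplit.
  change (densu t rho) with U; rewrite Hsplit.
  specialize (Hterm1 tau (X s rho) ltac:(lra) (HtermX s Hs HsdX)); simpl in Hterm1.
  rewrite !G0e_eq in Hterm1 by (apply X_ge0; unfold I in Hs; lra).
  specialize (Hterm2 s Hs Hst Hsd2); simpl in Hterm2; fold U in Hterm2.
  specialize (Hterm3 s Hs Hsd3); simpl in Hterm3; rewrite <- Rmult_minus_distr_l in Hterm3.
  eapply Rle_lt_trans; [apply Rabs_triang |]; rewrite Rabs_Ropp.
  fold x in Hterm2, Hterm3.
  eapply Rle_lt_trans; [apply Rplus_le_compat_r, Rabs_triang |]; lra.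
Qed.

Definition sol_u t rho :=
  if Req_EM_T (u0 (X t rho)) 0 then 0
  else rpow (rpow (u0 (X t rho)) (- a) + a * t) (- / a).

Lemma sol_u_eq t rho : 0 <= t <= Tmax -> 0 <= rho -> sol_u t rho = densu t rho.
Proof.
  intros Ht Hr; unfold sol_u, densu, G0; set (x := X t rho).
  assert (Hx : 0 <= x) by (apply X_ge0; assumption).
  destruct (Req_EM_T (u0 x) 0) as [E | E].
  - rewrite E, !rpow_zero; unfold densU, dens0; rewrite rpow_zero; ring.
  - apply densU_formula; [exact Ha | lra |]; pose proof (u0_nonneg x Hx); lra.
Qed.

Lemma sol_m_eq t rho : 0 <= t <= Tmax -> 0 <= rho -> RInt (sol_u t) 0 rho = massH t rho.
Proof.
  intros Ht Hr; rewrite <- massH_eq_RInt by assumption; apply RInt_ext.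
  intros z Hz; rewrite Rmin_left, Rmax_right in Hz by exact Hr.
  rewrite Rmax_right, sol_u_eq by lra; reflexivity.
Qed.

(* Along the characteristics the solution satisfies m_t = - m u^a. *)
Lemma massH_dt_eq t rho : 0 <= t <= Tmax -> 0 <= rho ->
  mass0 (X t rho) * massW_dt a t (G0 (X t rho)) - a * densu t rho * speed (X t rho)
  = - massH t rho * rpow (densu t rho) a.
Proof.
  intros Ht Hr; assert (Hx : 0 <= X t rho) by (apply X_ge0; assumption).
  unfold massH, densu, speed.
  transitivity (mass0 (X t rho) * (massW_dt a t (G0 (X t rho))
                 - a * densU a t (G0 (X t rho)) * G0 (X t rho))); [ring |].
  rewrite profile_identity_t by (exact Ha || lra || apply G0_ge0); ring.
Qed.

Section SolutionContinuity.
Variable Dm : R -> R -> Prop.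
Hypothesis Dm_sub : forall t x, Dm t x -> 0 <= t <= Tmax /\ 0 <= x.

Let G0e_X t x : Dm t x -> G0e (X t x) = G0 (X t x).
Proof. intros Htx; destruct (Dm_sub t x Htx); apply G0e_eq, X_ge0; assumption. Qed.

Lemma sol_u_cont2 : cont2_on Dm sol_u.
Proof.
  apply cont2_along_X with (fun s z => densU a s (G0e z)); [exact Dm_sub | |].
  - intros t x Htx; destruct (Dm_sub t x Htx).
    rewrite sol_u_eq, G0e_X by assumption; reflexivity.
  - intros t x Htx; destruct (Dm_sub t x Htx); apply densu_profile_cont; lra.
Qed.

Lemma sol_m_cont2 : cont2_on Dm (fun t rho => RInt (sol_u t) 0 rho).
Proof.
  apply cont2_along_X with (fun s z => mass0 z * massW a s (G0e z)); [exact Dm_sub | |].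
  - intros t x Htx; destruct (Dm_sub t x Htx).
    rewrite sol_m_eq, G0e_X by assumption; reflexivity.
  - intros t x Htx; destruct (Dm_sub t x Htx); apply massH_profile_cont; lra.
Qed.

Lemma sol_mt_cont2 : cont2_on Dm (fun t rho => - RInt (sol_u t) 0 rho * rpow (sol_u t rho) a).
Proof.
  apply cont2_along_X with
    (fun s z => - (mass0 z * massW a s (G0e z)) * rpow (densU a s (G0e z)) a); [exact Dm_sub | |].
  - intros t x Htx; destruct (Dm_sub t x Htx).
    rewrite sol_m_eq, sol_u_eq, G0e_X by assumption; reflexivity.
  - intros t x Htx; destruct (Dm_sub t x Htx); apply (continuous_mult (K := R_AbsRing)).
    + apply (continuous_opp (V := R_NormedModule)), massH_profile_cont; lra.
    + apply (continuous_comp (fun p : R * R => densU a (fst p) (G0e (snd p))) (fun y => rpow y a)).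
      * apply densu_profile_cont; lra.
      * apply rpow_cont; lra.
Qed.
End SolutionContinuity.

Lemma characteristic_solution :
  let m := fun t rho => RInt (sol_u t) 0 rho in
  cont2_on (fun t rho => 0 <= t <= Tmax /\ 0 <= rho) sol_u /\
  classical_solution a Tmax m /\
  (forall rho, 0 <= rho -> m 0 rho = RInt u0 0 rho) /\
  (forall t, 0 <= t <= Tmax -> m t 0 = 0).
Proof.
  intros m; pose proof Tmax_pos.
  assert (Hm : forall t rho, 0 <= t <= Tmax -> 0 <= rho -> m t rho = massH t rho)
    by (intros; apply sol_m_eq; assumption).
  split; [apply sol_u_cont2; tauto | split; [| split]].
  - exists (fun t rho => - m t rho * rpow (sol_u t rho) a), sol_u.
    split; [apply sol_m_cont2; intros; lra |].
    split; [apply sol_mt_cont2; intros; lra |].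
    split; [apply sol_u_cont2; intros; lra |].
    intros t rho [Ht Hr]; split; [| split; [| ring]].
    + rewrite Hm, sol_u_eq, <- massH_dt_eq by lra.
      apply is_derive_within_ext with (fun s => massH s rho); [intros; apply Hm; lra | exact Ht |].
      apply massH_derive_t; assumption.
    + rewrite sol_u_eq by lra.
      apply is_derive_ext_loc with (massH t); [| apply massH_derive_rho; lra].
      exists (mkposreal rho Hr); intros z Hz; rewrite ballR in Hz; simpl in Hz.
      apply Rabs_def2 in Hz; symmetry; apply Hm; lra.
  - intros rho Hr; rewrite Hm, mass0_eq by lra.
    unfold massH; rewrite X_initial, massW_0, Rmult_1_r by exact Hr; reflexivity.
  - intros t Ht; unfold m; rewrite RInt_point; reflexivity.
Qed.
End Characteristics.

Theorem mainTheorem2 (alpha : R) (u0 : R -> R)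
  (Halpha : 1 < alpha)
  (Hnonneg : forall x, 0 <= x -> 0 <= u0 x)
  (Hbdd : exists B, forall x, 0 <= x -> u0 x <= B)
  (Hint : ex_RInt_gen u0 (at_point 0) (Rbar_locally p_infty))
  (Hlip : exists K, forall x y, 0 <= x -> 0 <= y ->
      Rabs (rpow (u0 x) (alpha - 1) - rpow (u0 y) (alpha - 1)) <= K * Rabs (x - y)) :
  let m0 := fun rho => RInt u0 0 rho in
  let P := fun t rho0 => rho0 + alpha * m0 rho0 * rpow (u0 rho0) (alpha - 1) * t in
  exists T, 0 < T /\
    (forall t, 0 <= t <= T ->
       (forall x, 0 <= x -> 0 <= P t x) /\
       (forall y, 0 <= y -> exists x, 0 <= x /\ P t x = y) /\
       (exists c C, 0 < c /\ 0 < C /\ forall x y, 0 <= x -> 0 <= y ->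
          c * Rabs (x - y) <= Rabs (P t x - P t y) <= C * Rabs (x - y))) /\
    forall Pinv : R -> R -> R,
      (forall t rho, 0 <= t <= T -> 0 <= rho -> 0 <= Pinv t rho /\ P t (Pinv t rho) = rho) ->
      let u := fun t rho =>
        if Req_EM_T (u0 (Pinv t rho)) 0 then 0
        else rpow (rpow (u0 (Pinv t rho)) (- alpha) + alpha * t) (- / alpha) in
      let m := fun t rho => RInt (u t) 0 rho in
      cont2_on (fun t rho => 0 <= t <= T /\ 0 <= rho) u /\
      classical_solution alpha T m /\
      (forall rho, 0 <= rho -> m 0 rho = m0 rho) /\
      (forall t, 0 <= t <= T -> m t 0 = 0).
Proof.
  intros m0 P.
  destruct Hbdd as [B HB]; destruct Hlip as [K0 HK0].
  set (K := Rmax K0 0); assert (HK : 0 <= K) by apply Rmax_r.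
  assert (HG0 : forall x y, 0 <= x -> 0 <= y ->
            Rabs (G0 alpha u0 x - G0 alpha u0 y) <= K * Rabs (x - y)).
  { intros x y Hx Hy; eapply Rle_trans; [apply HK0; assumption |].
    apply Rmult_le_compat_r; [apply Rabs_pos | apply Rmax_l]. }
  destruct (mass0_bounded alpha Halpha u0 Hnonneg K HK HG0 Hint) as [Mb [HMb0 HMb]].
  assert (HP : forall t x, 0 <= x -> P t x = charP alpha u0 t x).
  { intros t x Hx; unfold P, m0, charP, speed, G0; rewrite mass0_eq by exact Hx; ring. }
  exists (Tmax alpha B K Mb); split; [exact (Tmax_pos alpha Halpha u0 Hnonneg B K HB HK Mb HMb0) |].
  split.
  - intros t Ht; split; [| split].
    + intros x Hx; rewrite HP by exact Hx.
      pose proof (charP_ge alpha Halpha u0 Hnonneg K HK HG0 t x (proj1 Ht) Hx); lra.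
    + intros y Hy.
      destruct (charP_surj alpha Halpha u0 Hnonneg B K HB HK HG0 Mb HMb0 HMb t y Ht Hy)
        as [x [Hx Hxy]].
      exists x; rewrite HP by exact Hx; split; assumption.
    + exists (/ 2), (3 / 2); split; [lra | split; [lra |]]; intros x y Hx Hy.
      rewrite !HP by assumption; apply (charP_bilip alpha Halpha u0 Hnonneg B K HB HK HG0 Mb HMb0 HMb); assumption.
  - intros Pinv HPinv.
    apply (characteristic_solution alpha Halpha u0 Hnonneg B K HB HK HG0 Mb HMb0 HMb Pinv).
    intros t rho Ht Hr; rewrite <- HP by (apply HPinv; assumption); apply HPinv; assumption.
Qed.
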